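(* Let $d\ge2$ be an integer, let $D_1,\dots,D_d$ be real constants, $D=\sum_iD_i$, and let $\lambda<\pi^2/d$. Let $L=(L_1,\dots,L_d)\in C^1([0,1];\mathbb{R}^d)$ be the unique solution of $$L_i'=-\Big(\sum_{k=1}^dL_k\Big)L_i-\lambda\ \text{ on }[0,1],\qquad\int_0^1L_i(r)\,dr=D_i\qquad(i=1,\dots,d).$$ If moreover $$(d-1)\lambda=\sum_{i=1}^dL_i(0)^2-\Big(\sum_{i=1}^dL_i(0)\Big)^2,$$ then $\lambda\in[-D^2/d,\pi^2/d)$. *)

From Stdlib Require Import Reals List.
From Coquelicot Require Import Coquelicot.
Open Scope R_scope.

Definition sumR (d : nat) (f : nat -> R) : R :=
  fold_right Rplus 0 (map f (seq 0 d)).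

Definition cont_in01 (f : R -> R) (x : R) : Prop :=
  filterlim f (within (fun y => 0 <= y <= 1) (locally x)) (locally (f x)).

(* Write S = sum_i L_i and Q = sum_i L_i^2.  The system gives S' = -S^2 - d lam
   and Q' = -2 S Q - 2 lam S, so G = Q - S^2 - (d-1) lam solves the linear
   equation G' = -2 S G; since G(0) = 0 by hypothesis, G vanishes on [0,1].
   Cauchy-Schwarz, S^2 <= d Q, then reads (d-1) (S^2 + d lam) >= 0, so
   S^2 >= -d lam on [0,1].  If -d lam > 0, the continuous S never vanishes,
   hence has constant sign and |S| >= sqrt (-d lam); integrating gives
   D^2 = (int_0^1 S)^2 >= -d lam.  The upper bound on lam is a hypothesis. *)

From Stdlib Require Import Reals List Lra Lia.
From Coquelicot Require Import Coquelicot.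
Open Scope R_scope.

Lemma fold_right_Rplus_init (a : R) (l : list R) :
  fold_right Rplus a l = fold_right Rplus 0 l + a.
Proof. induction l as [|x l IH]; simpl; [ring | rewrite IH; ring]. Qed.

Lemma sumR_0 (f : nat -> R) : sumR 0 f = 0.
Proof. reflexivity. Qed.

Lemma sumR_S (d : nat) (f : nat -> R) : sumR (S d) f = sumR d f + f d.
Proof.
  unfold sumR. rewrite seq_S, map_app, fold_right_app; simpl.
  rewrite fold_right_Rplus_init. ring.
Qed.

Lemma sumR_ext (d : nat) (f g : nat -> R) :
  (forall i, (i < d)%nat -> f i = g i) -> sumR d f = sumR d g.
Proof.
  induction d as [|d IH]; intros Hfg; [reflexivity|].
  rewrite !sumR_S, (Hfg d) by lia. rewrite IH; [reflexivity|].
  intros i Hi; apply Hfg; lia.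
Qed.

Lemma sumR_plus (d : nat) (f g : nat -> R) :
  sumR d (fun i => f i + g i) = sumR d f + sumR d g.
Proof. induction d as [|d IH]; rewrite ?sumR_0, ?sumR_S, ?IH; ring. Qed.

Lemma sumR_scal (d : nat) (c : R) (f : nat -> R) :
  sumR d (fun i => c * f i) = c * sumR d f.
Proof. induction d as [|d IH]; rewrite ?sumR_0, ?sumR_S, ?IH; ring. Qed.

Lemma sumR_const (d : nat) (c : R) : sumR d (fun _ => c) = INR d * c.
Proof. induction d as [|d IH]; rewrite ?sumR_0, ?sumR_S, ?IH, ?S_INR; simpl; ring. Qed.

Lemma sumR_nonneg (d : nat) (f : nat -> R) :
  (forall i, 0 <= f i) -> 0 <= sumR d f.
Proof.
  intros Hf; induction d as [|d IH]; [rewrite sumR_0; lra|].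
  rewrite sumR_S. specialize (Hf d). lra.
Qed.

(* Cauchy-Schwarz, from [0 <= sum_i (x_i - m)^2] with [m] the mean. *)
Lemma sqr_sumR_le (d : nat) (x : nat -> R) :
  (0 < d)%nat -> (sumR d x) ^ 2 <= INR d * sumR d (fun i => x i ^ 2).
Proof.
  intros Hd. assert (Hd0 : 0 < INR d) by (apply lt_0_INR; lia).
  set (m := sumR d x / INR d).
  assert (Hvar : 0 <= sumR d (fun i => (x i - m) ^ 2))
    by (apply sumR_nonneg; intros; apply pow2_ge_0).
  rewrite (sumR_ext d _ (fun i => (x i ^ 2 + (-2 * m) * x i) + m ^ 2)) in Hvar
    by (intros; ring).
  rewrite !sumR_plus, sumR_scal, sumR_const in Hvar.
  unfold m in Hvar.
  replace (sumR d (fun i => x i ^ 2) + -2 * (sumR d x / INR d) * sumR d x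
           + INR d * (sumR d x / INR d) ^ 2)
    with ((INR d * sumR d (fun i => x i ^ 2) - sumR d x ^ 2) / INR d) in Hvar
    by (field; lra).
  apply Rmult_le_compat_l with (r := INR d) in Hvar; [|lra].
  replace (INR d * ((INR d * sumR d (fun i => x i ^ 2) - sumR d x ^ 2) / INR d))
    with (INR d * sumR d (fun i => x i ^ 2) - sumR d x ^ 2) in Hvar by (field; lra).
  lra.
Qed.

Lemma is_derive_sumR (d : nat) (f df : nat -> R -> R) (x : R) :
  (forall i, (i < d)%nat -> is_derive (f i) x (df i x)) ->
  is_derive (fun y => sumR d (fun i => f i y)) x (sumR d (fun i => df i x)).
Proof.
  induction d as [|d IH]; intros Hf.
  - apply (is_derive_const (V := R_NormedModule) 0 x).
  - rewrite sumR_S.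
    apply (is_derive_ext (fun y => sumR d (fun i => f i y) + f d y));
      [intros; rewrite sumR_S; reflexivity|].
    apply (is_derive_plus (fun y => sumR d (fun i => f i y)) (f d));
      [apply IH; intros|]; apply Hf; lia.
Qed.

Lemma continuous_sumR (d : nat) (f : nat -> R -> R) (x : R) :
  (forall i, (i < d)%nat -> continuous (f i) x) ->
  continuous (fun y => sumR d (fun i => f i y)) x.
Proof.
  induction d as [|d IH]; intros Hf.
  - apply continuous_const.
  - apply (continuous_ext (fun y => sumR d (fun i => f i y) + f d y));
      [intros; rewrite sumR_S; reflexivity|].
    apply (continuous_plus (fun y => sumR d (fun i => f i y)) (f d));
      [apply IH; intros|]; apply Hf; lia.
Qed.

Lemma is_RInt_sumR (d : nat) (f : nat -> R -> R) (v : nat -> R) (a b : R) :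
  (forall i, (i < d)%nat -> is_RInt (f i) a b (v i)) ->
  is_RInt (fun y => sumR d (fun i => f i y)) a b (sumR d v).
Proof.
  induction d as [|d IH]; intros Hf.
  - rewrite sumR_0.
    replace 0 with (scal (b - a) (zero : R_NormedModule))
      by (unfold scal, zero; simpl; unfold mult; simpl; ring).
    apply is_RInt_const.
  - rewrite sumR_S.
    apply (is_RInt_ext (fun y => sumR d (fun i => f i y) + f d y));
      [intros; rewrite sumR_S; reflexivity|].
    apply (is_RInt_plus (fun y => sumR d (fun i => f i y)) (f d));
      [apply IH; intros|]; apply Hf; lia.
Qed.

Lemma is_derive_RInt_continuous (f : R -> R) (a x : R) :
  (forall y, continuous f y) -> is_derive (fun b => RInt f a b) x (f x).
Proof.
  intros Hf. apply (is_derive_RInt (V := R_NormedModule) f _ a x); [|apply Hf].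
  apply filter_forall; intros b.
  apply (RInt_correct (V := R_CompleteNormedModule)).
  apply (ex_RInt_continuous (V := R_CompleteNormedModule)); intros; apply Hf.
Qed.

(* Integrating factor: [g x * exp (- int_lo^x a)] has zero derivative. *)
Lemma linear_ode_zero (a g : R -> R) (lo hi : R) :
  (forall x, continuous a x) ->
  (forall x, lo <= x <= hi -> continuous g x) ->
  (forall x, lo < x < hi -> is_derive g x (a x * g x)) ->
  g lo = 0 -> forall x, lo <= x <= hi -> g x = 0.
Proof.
  intros Ha Hg Hg' Hlo x Hx.
  set (A := fun y => RInt a lo y).
  assert (dA : forall y, is_derive A y (a y))
    by (intros; apply is_derive_RInt_continuous, Ha).
  set (phi := fun y => g y * exp (- A y)).
  assert (dphi : forall y, lo < y < hi -> is_derive phi y 0).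
  { intros y Hy. unfold phi. auto_derive.
    - split; [exists (a y * g y); exact (Hg' y Hy)|].
      split; [exists (a y); exact (dA y)|exact I].
    - replace (Derive (fun z : R => g z) y) with (a y * g y)
        by (symmetry; apply is_derive_unique, Hg', Hy).
      replace (Derive (fun z : R => A z) y) with (a y)
        by (symmetry; apply is_derive_unique, dA).
      ring. }
  destruct (Req_dec x lo) as [->|Hne]; [exact Hlo|].
  destruct (MVT_gen phi lo x (fun _ => 0)) as [c [_ Hc]];
    rewrite ?Rmin_left, ?Rmax_right by lra.
  - intros y Hy. apply dphi. lra.
  - intros y Hy. apply continuity_pt_filterlim.
    apply (continuous_mult g (fun y => exp (- A y))); [apply Hg; lra|].
    apply continuous_exp_comp, (continuous_opp A).
    apply (ex_derive_continuous A). exists (a y). apply dA.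
  - unfold phi in Hc. rewrite Hlo in Hc.
    assert (Hexp := exp_pos (- A x)).
    destruct (Rmult_integral (g x) (exp (- A x))) as [|He]; [lra|assumption|lra].
Qed.

Lemma continuity_pos_of_nonvanishing (s : R -> R) (a b : R) :
  continuity s -> (forall x, a <= x <= b -> s x <> 0) -> 0 < s a ->
  forall x, a <= x <= b -> 0 < s x.
Proof.
  intros Hs Hnz Ha x Hx.
  destruct (Rlt_or_le 0 (s x)) as [|Hneg]; [assumption|exfalso].
  destruct (IVT_gen s a x 0 Hs) as [z [Hz Hsz]].
  - rewrite Rmin_right, Rmax_left by lra. lra.
  - rewrite Rmin_left, Rmax_right in Hz by lra. apply (Hnz z); [lra|exact Hsz].
Qed.

Lemma sqrt_mul_le_RInt (s : R -> R) (a b c D : R) :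
  a <= b -> continuity s -> is_RInt s a b D -> 0 < c ->
  (forall x, a <= x <= b -> c <= s x ^ 2) -> 0 < s a ->
  sqrt c * (b - a) <= D.
Proof.
  intros Hab Hs HI Hc Hsq Ha.
  assert (Hpos : forall x, a <= x <= b -> 0 < s x).
  { apply (continuity_pos_of_nonvanishing s a b Hs); [|exact Ha].
    intros x Hx E. specialize (Hsq x Hx). rewrite E in Hsq. simpl in Hsq. lra. }
  assert (Hsqrt : forall x, a <= x <= b -> sqrt c <= s x).
  { intros x Hx. rewrite <- (sqrt_pow2 (s x)) by (apply Rlt_le, Hpos, Hx).
    apply sqrt_le_1_alt, Hsq, Hx. }
  replace (sqrt c * (b - a)) with (scal (b - a) (sqrt c))
    by (unfold scal; simpl; unfold mult; simpl; ring).
  apply (is_RInt_le (fun _ => sqrt c) s a b); [exact Hab| |exact HI|].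
  - apply (is_RInt_const (V := R_NormedModule)).
  - intros x Hx. apply Hsqrt. lra.
Qed.

Lemma sqr_RInt_lower_bound (s : R -> R) (a b c D : R) :
  a <= b -> continuity s -> is_RInt s a b D ->
  (forall x, a <= x <= b -> c <= s x ^ 2) -> c * (b - a) ^ 2 <= D ^ 2.
Proof.
  intros Hab Hs HI Hsq.
  destruct (Rle_lt_dec c 0) as [Hc|Hc].
  { assert (0 <= (b - a) ^ 2) by apply pow2_ge_0.
    assert (0 <= D ^ 2) by apply pow2_ge_0. nra. }
  assert (Hsc : 0 < sqrt c) by (apply sqrt_lt_R0, Hc).
  assert (Hsqr : c * (b - a) ^ 2 = (sqrt c * (b - a)) ^ 2)
    by (rewrite Rpow_mult_distr, pow2_sqrt; lra).
  rewrite Hsqr.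
  destruct (Rlt_or_le 0 (s a)) as [Ha|Ha].
  - apply pow_incr. split; [nra|].
    exact (sqrt_mul_le_RInt s a b c D Hab Hs HI Hc Hsq Ha).
  - assert (Ha' : 0 < - s a).
    { assert (s a <> 0) by (intros E; specialize (Hsq a (conj (Rle_refl a) Hab));
        rewrite E in Hsq; simpl in Hsq; lra). lra. }
    assert (Hsq' : forall x, a <= x <= b -> c <= (- s x) ^ 2).
    { intros x Hx. replace ((- s x) ^ 2) with (s x ^ 2) by ring. exact (Hsq x Hx). }
    assert (H := sqrt_mul_le_RInt (fun x => - s x) a b c (- D) Hab
      (continuity_opp s Hs) (is_RInt_opp s a b D HI) Hc Hsq' Ha').
    replace (D ^ 2) with ((- D) ^ 2) by ring. apply pow_incr. split; [nra|exact H].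
Qed.

Lemma continuous_pow2_comp (f : R -> R) (x : R) :
  continuous f x -> continuous (fun y => f y ^ 2) x.
Proof.
  intros Hf. apply (continuous_comp f (fun z => z ^ 2)); [exact Hf|].
  apply (ex_derive_continuous (fun z => z ^ 2)). auto_derive. exact I.
Qed.

(* The [L i] are only continuous relative to [[0, 1]]; precomposing with this
   retraction of [R] onto [[0, 1]] gives functions continuous on all of [R],
   as the MVT, IVT and integrability lemmas above require. *)
Definition clamp01 (x : R) : R := Rmax 0 (Rmin 1 x).

Lemma clamp01_in (x : R) : 0 <= clamp01 x <= 1.
Proof. unfold clamp01, Rmax, Rmin; repeat destruct Rle_dec; lra. Qed.

Lemma clamp01_id (x : R) : 0 <= x <= 1 -> clamp01 x = x.
Proof. unfold clamp01, Rmax, Rmin; repeat destruct Rle_dec; lra. Qed.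

Lemma clamp01_lipschitz (x y : R) : Rabs (clamp01 y - clamp01 x) <= Rabs (y - x).
Proof. unfold clamp01, Rmax, Rmin; repeat destruct Rle_dec; split_Rabs; lra. Qed.

Lemma continuous_clamp01_comp (f : R -> R) (x : R) :
  cont_in01 f (clamp01 x) -> continuous (fun y => f (clamp01 y)) x.
Proof.
  intros Hf P HP. destruct (Hf P HP) as [eps He].
  exists eps. intros y Hy. apply He; [|apply clamp01_in].
  eapply Rle_lt_trans; [apply clamp01_lipschitz|exact Hy].
Qed.

Lemma is_RInt_clamp01_comp (f : R -> R) :
  (forall x, continuous (fun y => f (clamp01 y)) x) ->
  is_RInt (fun y => f (clamp01 y)) 0 1 (RInt f 0 1).
Proof.
  intros Hf.
  replace (RInt f 0 1) with (RInt (fun y => f (clamp01 y)) 0 1).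
  - apply (RInt_correct (V := R_CompleteNormedModule)).
    apply (ex_RInt_continuous (V := R_CompleteNormedModule)); intros; apply Hf.
  - apply RInt_ext. intros x Hx. rewrite Rmin_left, Rmax_right in Hx by lra.
    rewrite clamp01_id by lra. reflexivity.
Qed.

Definition riccati_defect (d : nat) (lam : R) (L : nat -> R -> R) (r : R) : R :=
  sumR d (fun i => L i r ^ 2) - (sumR d (fun i => L i r)) ^ 2 - (INR d - 1) * lam.

Section RiccatiSystem.

Variables (d : nat) (lam : R) (L : nat -> R -> R).

Hypothesis hode : forall i, (i < d)%nat -> forall r, 0 < r < 1 ->
  is_derive (L i) r (- (sumR d (fun k => L k r)) * L i r - lam).

Lemma is_derive_sum_L (r : R) : 0 < r < 1 ->
  is_derive (fun y => sumR d (fun i => L i y)) r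
    (- (sumR d (fun i => L i r)) ^ 2 - INR d * lam).
Proof.
  intros Hr. set (S := sumR d (fun i => L i r)).
  replace (- S ^ 2 - INR d * lam) with (sumR d (fun i => - S * L i r - lam)).
  - apply (is_derive_sumR d L (fun i y => - S * L i y - lam)).
    intros i Hi. apply hode; assumption.
  - rewrite (sumR_ext d _ (fun i => - S * L i r + - lam)) by (intros; ring).
    rewrite sumR_plus, sumR_scal, sumR_const. fold S. ring.
Qed.

Lemma is_derive_sum_sqr_L (r : R) : 0 < r < 1 ->
  is_derive (fun y => sumR d (fun i => L i y ^ 2)) r
    (-2 * sumR d (fun i => L i r) * sumR d (fun i => L i r ^ 2)
     - 2 * lam * sumR d (fun i => L i r)).
Proof.
  intros Hr. set (S := sumR d (fun i => L i r)).
  replace (-2 * S * sumR d (fun i => L i r ^ 2) - 2 * lam * S)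
    with (sumR d (fun i => 2 * (- S * L i r - lam) * L i r)).
  - apply (is_derive_sumR d (fun i y => L i y ^ 2)
      (fun i y => 2 * (- S * L i r - lam) * L i y)).
    intros i Hi. replace (2 * (- S * L i r - lam) * L i r)
      with (INR 2 * (- S * L i r - lam) * L i r ^ Nat.pred 2) by (simpl; ring).
    apply is_derive_pow, hode; assumption.
  - rewrite (sumR_ext d _ (fun i => (-2 * S) * L i r ^ 2 + (-2 * lam) * L i r))
      by (intros; ring).
    rewrite sumR_plus, !sumR_scal. fold S. ring.
Qed.

Lemma is_derive_riccati_defect (r : R) : 0 < r < 1 ->
  is_derive (riccati_defect d lam L) r
    (-2 * sumR d (fun i => L i r) * riccati_defect d lam L r).
Proof.
  intros Hr. unfold riccati_defect.
  set (S := sumR d (fun i => L i r)). set (Q := sumR d (fun i => L i r ^ 2)).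
  replace (-2 * S * (Q - S ^ 2 - (INR d - 1) * lam))
    with ((-2 * S * Q - 2 * lam * S)
          - INR 2 * (- S ^ 2 - INR d * lam) * S ^ Nat.pred 2 - 0)
    by (simpl; ring).
  apply (is_derive_minus
    (fun y => sumR d (fun i => L i y ^ 2) - sumR d (fun i => L i y) ^ 2)
    (fun _ => (INR d - 1) * lam)); [|apply (is_derive_const (V := R_NormedModule))].
  apply (is_derive_minus _ (fun y => sumR d (fun i => L i y) ^ 2)).
  - apply is_derive_sum_sqr_L, Hr.
  - apply (is_derive_pow (fun y => sumR d (fun i => L i y))), is_derive_sum_L, Hr.
Qed.

Hypothesis hcont : forall i, (i < d)%nat -> forall r, 0 <= r <= 1 ->
  cont_in01 (L i) r.

Lemma continuous_L_clamp01 (i : nat) (x : R) : (i < d)%nat ->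
  continuous (fun y => L i (clamp01 y)) x.
Proof. intros Hi. apply continuous_clamp01_comp, hcont, clamp01_in. exact Hi. Qed.

Lemma continuous_sum_L_clamp01 (x : R) :
  continuous (fun y => sumR d (fun i => L i (clamp01 y))) x.
Proof.
  apply (continuous_sumR d (fun i y => L i (clamp01 y))).
  intros i Hi. apply continuous_L_clamp01, Hi.
Qed.

Lemma riccati_defect_zero : riccati_defect d lam L 0 = 0 ->
  forall r, 0 <= r <= 1 -> riccati_defect d lam L r = 0.
Proof.
  intros H0 r Hr. rewrite <- (clamp01_id r) by exact Hr.
  apply (linear_ode_zero (fun y => -2 * sumR d (fun i => L i (clamp01 y)))
    (fun y => riccati_defect d lam L (clamp01 y)) 0 1);
    [| | |now rewrite clamp01_id by lra|exact Hr].
  - intros x. apply (continuous_mult (fun _ => -2)); [apply continuous_const|].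
    apply continuous_sum_L_clamp01.
  - intros x _. unfold riccati_defect.
    apply (continuous_minus _ (fun _ => (INR d - 1) * lam)); [|apply continuous_const].
    apply (continuous_minus (fun y => sumR d (fun i => L i (clamp01 y) ^ 2))).
    + apply (continuous_sumR d (fun i y => L i (clamp01 y) ^ 2)). intros i Hi.
      apply continuous_pow2_comp, continuous_L_clamp01, Hi.
    + apply continuous_pow2_comp, continuous_sum_L_clamp01.
  - intros x Hx. apply (is_derive_ext_loc (riccati_defect d lam L)).
    + eapply filter_imp; [|exact (open_and _ _ (open_gt 0) (open_lt 1) x Hx)].
      intros t Ht. simpl in Ht. now rewrite clamp01_id by lra.
    + rewrite clamp01_id by lra. apply is_derive_riccati_defect, Hx.
Qed.

Lemma sqr_sum_L_lower_bound : (1 < d)%nat -> riccati_defect d lam L 0 = 0 ->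
  forall r, 0 <= r <= 1 -> - (INR d * lam) <= (sumR d (fun i => L i r)) ^ 2.
Proof.
  intros Hd H0 r Hr.
  assert (Hdef := riccati_defect_zero H0 r Hr). unfold riccati_defect in Hdef.
  assert (HCS := sqr_sumR_le d (fun i => L i r) ltac:(lia)).
  assert (Hd1 : 1 < INR d) by (apply lt_1_INR; lia).
  set (S := sumR d (fun i => L i r)) in *.
  set (Q := sumR d (fun i => L i r ^ 2)) in *.
  assert (Hprod : 0 <= (INR d - 1) * (S ^ 2 + INR d * lam)) by nra.
  assert (Hpos : 0 <= S ^ 2 + INR d * lam).
  { apply (Rmult_le_reg_l (INR d - 1)); lra. }
  lra.
Qed.

Lemma is_RInt_sum_L_clamp01 (Dc : nat -> R) :
  (forall i, (i < d)%nat -> RInt (L i) 0 1 = Dc i) ->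
  is_RInt (fun y => sumR d (fun i => L i (clamp01 y))) 0 1 (sumR d Dc).
Proof.
  intros Hint. apply (is_RInt_sumR d (fun i y => L i (clamp01 y))).
  intros i Hi. rewrite <- (Hint i Hi).
  apply is_RInt_clamp01_comp. intros x. apply continuous_L_clamp01, Hi.
Qed.

End RiccatiSystem.

Theorem lemma3p3 (d : nat) (Dc : nat -> R) (lam : R) (L : nat -> R -> R)
  (hd : (2 <= d)%nat)
  (hlam : lam < PI ^ 2 / INR d)
  (hcont : forall i, (i < d)%nat -> forall r, 0 <= r <= 1 -> cont_in01 (L i) r)
  (hode : forall i, (i < d)%nat -> forall r, 0 < r < 1 ->
      is_derive (L i) r (- (sumR d (fun k => L k r)) * L i r - lam))
  (hint : forall i, (i < d)%nat -> RInt (L i) 0 1 = Dc i)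
  (hcond : (INR d - 1) * lam =
      sumR d (fun i => (L i 0) ^ 2) - (sumR d (fun i => L i 0)) ^ 2) :
  - (sumR d Dc) ^ 2 / INR d <= lam /\ lam < PI ^ 2 / INR d.
Proof.
  split; [|exact hlam].
  assert (Hd : 0 < INR d) by (apply lt_0_INR; lia).
  assert (Hdefect0 : riccati_defect d lam L 0 = 0)
    by (unfold riccati_defect; rewrite hcond; ring).
  assert (Hbound : - (INR d * lam) * (1 - 0) ^ 2 <= sumR d Dc ^ 2).
  { apply (sqr_RInt_lower_bound (fun y => sumR d (fun i => L i (clamp01 y)))).
    - lra.
    - intros x. apply continuity_pt_filterlim, continuous_sum_L_clamp01, hcont.
    - apply is_RInt_sum_L_clamp01; assumption.
    - intros x _.
      apply sqr_sum_L_lower_bound; [exact hode|exact hcont|lia|exact Hdefect0|].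
      apply clamp01_in. }
  apply (Rmult_le_reg_l (INR d)); [exact Hd|].
  replace (INR d * (- sumR d Dc ^ 2 / INR d)) with (- sumR d Dc ^ 2) by (field; lra).
  lra.
Qed.
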